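(* Let $\phi\in\Phi$, $f:\mathbb{R}^{n_1\times n_2}\to(-\infty,+\infty]$ proper lsc, $\Omega\subseteq\mathbb{R}^{n_1\times n_2}$ closed ($n_1\le n_2$), $\delta>0$, and suppose $\min_X\{\mathrm{rank}(X): f(X)\le\delta,\ X\in\Omega\}$ has a nonempty global optimal solution set. Consider $$\textstyle (Q)\ \min_{X,W\in\mathbb{R}^{n_1\times n_2}}\Big\{\sum_{i=1}^{n_1}\phi(\sigma_i(W)):\ \|X\|_*-\langle W,X\rangle=0,\ \|W\|\le1,\ X\in\Omega,\ f(X)\le\delta\Big\}.$$ If $X^*=U^*[\mathrm{Diag}(\sigma(X^* ))\ \ 0](V^* )^T$ (an SVD) is globally optimal for the rank minimization problem, then $(X^*,\,U_1^*(V_1^* )^T+t^*U_2^*[\mathrm{Diag}(e)\ \ 0](V_2^* )^T)$ is globally optimal for $(Q)$; conversely, if $(X^*,W^* )$ is globally optimal for $(Q)$, then $X^*$ is globally optimal for the rank minimization problem.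
   Context: $\Phi$ is the family of proper lsc functions $\phi:\mathbb{R}\to(-\infty,+\infty]$ with $\mathrm{int}(\mathrm{dom}\,\phi)\supseteq[0,1]$, convex on $[0,1]$, such that $\min_{t\in[0,1]}\phi(t)=0$ is attained at a (fixed) point $t^*\in[0,1)$, and $\phi(1)=1$. $\sigma(X)\in\mathbb{R}^{n_1}$ is the vector of singular values in nonincreasing order; $\|X\|_*$ nuclear norm, $\|X\|$ spectral norm, $\langle\cdot,\cdot\rangle$ trace inner product. For $X$ with SVD $U[\mathrm{Diag}(\sigma(X))\ 0]V^T$ and $r=\mathrm{rank}(X)$, $U_1,V_1$ are the first $r$ columns of $U,V$, and $U_2,V_2$ are the last $n_1-r$ and $n_2-r$ columns of $U,V$ respectively; $e$ is the all-ones vector of length $n_1-r$. *)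

(* Real numbers are modelled by an arbitrary real closed
   field R : rcfType. *)
From HB Require Import structures.
From mathcomp Require Import all_boot all_order all_algebra.
From Stdlib Require Import ClassicalEpsilon.
Set Implicit Arguments. Unset Strict Implicit. Unset Printing Implicit Defensive.
Import Order.TTheory GRing.Theory Num.Theory.
Local Open Scope ring_scope.

(* Extended reals (-oo, +oo] : [Some x] is the real x, [None] is +oo. *)
Definition ereal (R : Type) := option R.
Definition pinf {R : Type} : ereal R := None.

Definition ele {R : rcfType} (a b : ereal R) : Prop :=
  match a, b with
  | Some x, Some y => x <= y
  | _, None => True
  | None, Some _ => False
  end.

Definition eadd {R : rcfType} (a b : ereal R) : ereal R :=
  match a, b with
  | Some x, Some y => Some (x + y)
  | _, _ => None
  end.

Definition rlt_e {R : rcfType} (a : R) (b : ereal R) : Prop :=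
  match b with Some y => a < y | None => True end.

Definition proper_fun {T} {R : rcfType} (g : T -> ereal R) : Prop :=
  exists x, g x <> None.

Definition lsc_R {R : rcfType} (g : R -> ereal R) : Prop :=
  forall x (a : R), rlt_e a (g x) ->
    exists eps : R, 0 < eps /\ forall y, `|y - x| < eps -> rlt_e a (g y).

Definition unit_interval_in_int_dom {R : rcfType} (g : R -> ereal R) : Prop :=
  forall t : R, 0 <= t <= 1 ->
    exists eps : R, 0 < eps /\ forall s, `|s - t| < eps -> g s <> None.

Definition convex_on_unit {R : rcfType} (g : R -> ereal R) : Prop :=
  forall (t s lam : R), 0 <= t <= 1 -> 0 <= s <= 1 -> 0 <= lam <= 1 ->
    forall gt gs, g t = Some gt -> g s = Some gs ->
      ele (g (lam * t + (1 - lam) * s)) (Some (lam * gt + (1 - lam) * gs)).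

Definition in_Phi {R : rcfType} (tstar : R) (phi : R -> ereal R) : Prop :=
  [/\ proper_fun phi, lsc_R phi, unit_interval_in_int_dom phi
    & convex_on_unit phi] /\
  [/\ 0 <= tstar < 1, phi tstar = Some 0,
      (forall t : R, 0 <= t <= 1 -> ele (Some 0) (phi t))
    & phi 1 = Some 1].

Definition mx_near {R : rcfType} {n1 n2 : nat} (eps : R) (X Y : 'M[R]_(n1, n2)) :=
  forall i j, `|Y i j - X i j| < eps.

Definition lsc_mx {R : rcfType} {n1 n2 : nat} (g : 'M[R]_(n1, n2) -> ereal R) : Prop :=
  forall X (a : R), rlt_e a (g X) ->
    exists eps : R, 0 < eps /\ forall Y, mx_near eps X Y -> rlt_e a (g Y).

Definition closed_mx {R : rcfType} {n1 n2 : nat} (Om : 'M[R]_(n1, n2) -> Prop) : Prop :=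
  forall X, ~ Om X -> exists eps : R, 0 < eps /\ forall Y, mx_near eps X Y -> ~ Om Y.

Definition orthogonal_mx {R : rcfType} {n : nat} (U : 'M[R]_n) : Prop :=
  U *m U^T = 1%:M.

Definition rdiag {R : rcfType} {n1 n2 : nat} (s : 'rV[R]_n1) : 'M[R]_(n1, n2) :=
  \matrix_(i < n1, j < n2) (if (i : nat) == (j : nat) then s 0 i else 0).

Definition is_svd {R : rcfType} {n1 n2 : nat} (X : 'M[R]_(n1, n2))
    (U : 'M[R]_n1) (s : 'rV[R]_n1) (V : 'M[R]_n2) : Prop :=
  [/\ orthogonal_mx U, orthogonal_mx V,
      (forall i : 'I_n1, 0 <= s 0 i),
      (forall i j : 'I_n1, (i <= j)%N -> s 0 j <= s 0 i)
    & X = U *m rdiag s *m V^T].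

Definition sigma {R : rcfType} {n1 n2 : nat} (X : 'M[R]_(n1, n2)) : 'rV[R]_n1 :=
  epsilon (inhabits 0) (fun s => exists U V, is_svd X U s V).

Definition nucnorm {R : rcfType} {n1 n2 : nat} (X : 'M[R]_(n1, n2)) : R :=
  \sum_(i < n1) sigma X 0 i.

Definition specnorm {R : rcfType} {n1 n2 : nat} (X : 'M[R]_(n1, n2)) : R :=
  \big[Num.max/0]_(i < n1) sigma X 0 i.

Definition trinner {R : rcfType} {n1 n2 : nat} (W X : 'M[R]_(n1, n2)) : R :=
  \tr (W^T *m X).

Definition rank_feasible {R : rcfType} {n1 n2 : nat}
    (f : 'M[R]_(n1, n2) -> ereal R) (Om : 'M[R]_(n1, n2) -> Prop) (delta : R)
    (X : 'M[R]_(n1, n2)) : Prop :=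
  ele (f X) (Some delta) /\ Om X.

Definition rank_optimal {R : rcfType} {n1 n2 : nat}
    (f : 'M[R]_(n1, n2) -> ereal R) (Om : 'M[R]_(n1, n2) -> Prop) (delta : R)
    (X : 'M[R]_(n1, n2)) : Prop :=
  rank_feasible f Om delta X /\
  forall Y, rank_feasible f Om delta Y -> (\rank X <= \rank Y)%N.

Definition Q_obj {R : rcfType} {n1 n2 : nat} (phi : R -> ereal R)
    (W : 'M[R]_(n1, n2)) : ereal R :=
  foldr eadd (Some 0) [seq phi (sigma W 0 i) | i <- enum 'I_n1].

Definition Q_feasible {R : rcfType} {n1 n2 : nat}
    (f : 'M[R]_(n1, n2) -> ereal R) (Om : 'M[R]_(n1, n2) -> Prop) (delta : R)
    (X W : 'M[R]_(n1, n2)) : Prop :=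
  [/\ nucnorm X - trinner W X = 0, specnorm W <= 1, Om X & ele (f X) (Some delta)].

Definition Q_optimal {R : rcfType} {n1 n2 : nat} (phi : R -> ereal R)
    (f : 'M[R]_(n1, n2) -> ereal R) (Om : 'M[R]_(n1, n2) -> Prop) (delta : R)
    (X W : 'M[R]_(n1, n2)) : Prop :=
  Q_feasible f Om delta X W /\
  forall X' W', Q_feasible f Om delta X' W' -> ele (Q_obj phi W) (Q_obj phi W').

(* U_1 V_1^T + t U_2 [Diag(e) 0] V_2^T  (with U_1,V_1 the first r columns,
   U_2,V_2 the remaining ones), written as the equal block product
   U [Diag(1,..,1,t,..,t) 0] V^T with r ones. *)
Definition Wstar {R : rcfType} {n1 n2 : nat} (U : 'M[R]_n1) (V : 'M[R]_n2)
    (r : nat) (t : R) : 'M[R]_(n1, n2) :=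
  U *m rdiag (\row_(i < n1) (if (i < r)%N then 1 else t)) *m V^T.

(* Over any real closed field an SVD exists (spectral theorem for X X^T, by
   Householder deflation), and the singular values are unique, being read off
   the characteristic polynomial of X X^T.  For (X, W) feasible for (Q), the
   equality ||X||_* = <W, X> with ||W|| <= 1 is the equality case of von
   Neumann's trace inequality: every left singular vector of X with positive
   singular value lies in the span of the left singular vectors of W with
   singular value 1, so at least rank X singular values of W equal 1.  As
   phi >= 0 on [0, 1] and phi(1) = 1, the objective of (Q) is at least rank X.
   The matrix W* has rank X* singular values 1 and the others t*, so it attains
   this bound at a rank minimizer X*; both directions follow. *)

From mathcomp Require Import all_boot all_order all_algebra.
From mathcomp Require Import ring lra polyrcf complex.
From Stdlib Require Import ClassicalEpsilon.
Import Order.TTheory GRing.Theory Num.Theory.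
Local Open Scope ring_scope.
Set Implicit Arguments. Unset Strict Implicit. Unset Printing Implicit Defensive.

Section Orthogonal.
Variable R : rcfType.

Definition sqnorm n (v : 'rV[R]_n) : R := (v *m v^T) 0 0.

Lemma sqnormE n (v : 'rV[R]_n) : sqnorm v = \sum_i v 0 i ^+ 2.
Proof. by rewrite /sqnorm mxE; apply: eq_bigr => i _; rewrite mxE expr2. Qed.

Lemma sqnorm_ge0 n (v : 'rV[R]_n) : 0 <= sqnorm v.
Proof. by rewrite sqnormE sumr_ge0 // => i _; rewrite sqr_ge0. Qed.

Lemma sqnorm_eq0 n (v : 'rV[R]_n) : sqnorm v = 0 -> v = 0.
Proof.
rewrite sqnormE => /eqP; rewrite psumr_eq0 => [/allP v0|i _]; last exact: sqr_ge0.
apply/rowP => i; rewrite mxE; apply/eqP; rewrite -sqrf_eq0.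
exact: (implyP (v0 i (mem_index_enum _))).
Qed.

Lemma sqnormZ n (a : R) (v : 'rV[R]_n) : sqnorm (a *: v) = a ^+ 2 * sqnorm v.
Proof. by rewrite /sqnorm linearZ /= -scalemxAl -scalemxAr scalerA !mxE expr2. Qed.

Lemma row_dot_row m n (Y : 'M[R]_(m, n)) i j :
  ((row i Y) *m (row j Y)^T) 0 0 = (Y *m Y^T) i j.
Proof. by rewrite !mxE; apply: eq_bigr => k _; rewrite !mxE. Qed.

Lemma orthogonal_mxC n (U : 'M[R]_n) : orthogonal_mx U -> U^T *m U = 1%:M.
Proof. exact: mulmx1C. Qed.

Lemma orthogonal_trmx n (U : 'M[R]_n) : orthogonal_mx U -> orthogonal_mx U^T.
Proof. by rewrite /orthogonal_mx trmxK; apply: mulmx1C. Qed.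

Lemma orthogonal_unitmx n (U : 'M[R]_n) : orthogonal_mx U -> U \in unitmx.
Proof. by case/mulmx1_unit. Qed.

Lemma orthogonal_mulmx n (U V : 'M[R]_n) :
  orthogonal_mx U -> orthogonal_mx V -> orthogonal_mx (U *m V).
Proof. by move=> HU HV; rewrite /orthogonal_mx trmx_mul mulmxA -(mulmxA U) HV mulmx1. Qed.

Lemma orthogonal_block1 n (U : 'M[R]_n) :
  orthogonal_mx U -> orthogonal_mx (block_mx 1%:M 0 0 U : 'M[R]_(1 + n)).
Proof.
move=> HU; rewrite /orthogonal_mx (tr_block_mx (1%:M : 'M[R]_1)) !trmx0 tr_scalar_mx.
by rewrite mulmx_block !(mulmx0, mul0mx, mulmx1, addr0, add0r) HU -scalar_mx_block.
Qed.

(* The witness is the Householder reflection exchanging [e_0] and [q]. *)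
Lemma orthogonal_mx_row0 n (q : 'rV[R]_n.+1) : sqnorm q = 1 ->
  exists2 H : 'M[R]_n.+1, orthogonal_mx H & row 0 H = q.
Proof.
move=> q1; pose e0 : 'rV[R]_n.+1 := 'e_0.
pose w := e0 - q; have wE : w = e0 - q by []; clearbody w.
pose c := sqnorm w; pose k := 2 / c.
pose H : 'M[R]_n.+1 := 1%:M - k *: (w^T *m w).
have HT : H^T = H by rewrite /H linearB /= trmx1 linearZ /= trmx_mul trmxK.
have e0v (v : 'rV[R]_n.+1) : e0 *m v^T = (v 0 0)%:M.
  by rewrite -rowE; apply/matrixP => i j; rewrite !mxE !ord1 eqxx mulr1n.
have cE : c = 2 * (1 - q 0 0).
  have qe : q *m e0^T = (q 0 0)%:M.
    by rewrite -[q *m _]trmxK trmx_mul trmxK e0v tr_scalar_mx.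
  rewrite /c /sqnorm wE linearB /= mulmxBl !mulmxBr e0v e0v qe.
  by rewrite !mxE eqxx /= !mulr1n; move: q1; rewrite /sqnorm mxE => ->; ring.
exists H.
  have ww : w *m w^T = c%:M by rewrite [LHS]mx11_scalar.
  have kc : k * k * c = 2 * k.
    by rewrite /k; have [->|c0] := eqVneq c 0; [rewrite invr0 !mulr0 | field].
  have PP : (w^T *m w) *m (w^T *m w) = c *: (w^T *m w).
    by rewrite mulmxA -(mulmxA _ w) ww mul_mx_scalar -scalemxAl.
  rewrite /orthogonal_mx HT /H mulmxBl mul1mx mulmxBr mulmx1 -scalemxAl -scalemxAr.
  by rewrite PP !scalerA; apply/matrixP => i j; rewrite !mxE kc; ring.
rewrite rowE /H mulmxBr mulmx1 -scalemxAr mulmxA e0v mul_scalar_mx scalerA.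
have [c0|c0] := eqVneq c 0.
  have w0 : w = 0 by apply: sqnorm_eq0.
  by apply/eqP; rewrite w0 scaler0 subr0 -subr_eq0 -wE w0.
have q00 : 1 - q 0 0 != 0 by move: c0; rewrite cE mulf_eq0 negb_or => /andP[].
have -> : k * w 0 0 = 1 by rewrite /k cE wE !mxE eqxx mulr1n; field.
by rewrite scale1r wE opprB addrC subrK.
Qed.

Lemma block_mx_deflate m n (Z : 'M[R]_(1 + m, 1 + n)) (a : R) :
  row 0 Z = a *: 'e_0 -> (forall i, Z (rshift 1 i) 0 = 0) ->
  Z = block_mx a%:M 0 0 (drsubmx Z).
Proof.
move=> Z0 Zi0; have Z0j j : Z 0 j = a * ('e_0 : 'rV[R]_(1 + n)) 0 j.
  by have /rowP /(_ j) := Z0; rewrite !mxE.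
have l0 k : lshift k (0 : 'I_1) = 0 by apply: val_inj.
rewrite -[LHS]submxK; congr block_mx; apply/matrixP => i j; rewrite !mxE ?ord1 ?l0 //.
- by rewrite Z0j !mxE eqxx mulr1n mulr1.
- by rewrite Z0j !mxE /= mulr0.
Qed.
End Orthogonal.

Lemma seq_max_mem (R : realDomainType) (x : R) (s : seq R) :
  exists2 m, m \in x :: s & forall y, y \in x :: s -> y <= m.
Proof.
elim: s x => [|y s IH] x; first by exists x => [|z]; rewrite ?mem_head // inE => /eqP ->.
have [m ms mM] := IH y; exists (Num.max x m).
  by case: leP => _; rewrite inE ?eqxx // ms orbT.
move=> z; rewrite inE => /orP[/eqP -> | zs]; first by rewrite le_max lexx.
by rewrite le_max mM ?orbT.
Qed.

Section Spectral.
Variable R : rcfType.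

Definition nonincreasing n (s : 'rV[R]_n) :=
  forall i j : 'I_n, (i <= j)%N -> s 0 j <= s 0 i.

Lemma nonincreasing_row_mx n (a : R) (s : 'rV[R]_n) :
  (forall i, s 0 i <= a) -> nonincreasing s ->
  nonincreasing (row_mx (a%:M : 'rV[R]_1) s).
Proof.
move=> sa sS i j ij; rewrite !mxE.
case: splitP => [j1 /= hj|j2 /= hj]; case: splitP => [i1 /= hi|i2 /= hi].
- by rewrite !ord1.
- by move: ij; rewrite hi hj; case: j1 {hj} => [[]].
- by rewrite ord1 mxE eqxx mulr1n.
- by apply: sS; move: ij; rewrite hi hj.
Qed.

Lemma symmetric_eigenvalue n (A : 'M[R]_n.+1) : A^T = A -> exists a, eigenvalue A a.
Proof.
move=> AT; pose Ac := map_mx (real_complex R) A.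
have Asym : Ac \is symmetricmx.
  by apply/is_hermitianmxP; rewrite expr0 scale1r map_mx_id // /Ac map_trmx AT.
have Areal : Ac \is a mxOver Num.real.
  by apply/mxOverP => i j; rewrite mxE /= complex_real.
have Aherm := realsym_hermsym Asym Areal.
have /orthomx_spectralP AE := hermitian_normalmx Aherm.
set P := spectralmx Ac in AE; set d := spectral_diag Ac in AE.
have eig_d : eigenvalue Ac (d 0 0).
  apply/eigenvalueP; exists (row 0 P).
    rewrite [in LHS]AE rowE !mulmxA -(mulmxA _ P) mulmxV ?spectral_unit // mulmx1.
    by rewrite -(rowE 0 (diag_mx d)) row_diag_mx -scalemxAl.
  rewrite rowE mulmx_free_eq0 ?row_free_unit ?spectral_unit //.
  by apply/eqP => /matrixP /(_ 0 0); rewrite !mxE eqxx => /eqP; rewrite oner_eq0.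
have /complex_realP [k dk] : d 0 0 \is Num.real.
  by move/mxOverP : (hermitian_spectral_diag_real Aherm) => /(_ 0 0).
by exists k; rewrite -(eigenvalue_map (real_complex R)); move: eig_d; rewrite dk.
Qed.

Lemma symmetric_max_eigenvalue n (A : 'M[R]_n.+1) : A^T = A ->
  exists m, eigenvalue A m /\ forall x, eigenvalue A x -> x <= m.
Proof.
move=> /symmetric_eigenvalue [a ea].
have pA0 : char_poly A != 0 by apply/monic_neq0/char_poly_monic.
have eigE x : eigenvalue A x = (x \in rootsR (char_poly A)).
  by rewrite eigenvalue_root_char -(roots_on_rootsR pA0 x) in_itv.
have [m ms mM] := seq_max_mem a (rootsR (char_poly A)).
have sE : a :: rootsR (char_poly A) =i rootsR (char_poly A).
  by move=> x; rewrite inE; case: eqP => // ->; rewrite -eigE.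
by exists m; split; [rewrite eigE -sE | move=> x; rewrite eigE -sE; apply: mM].
Qed.

Lemma char_poly_orthogonal_conj n (U A : 'M[R]_n) : orthogonal_mx U ->
  char_poly (U *m A *m U^T) = char_poly A.
Proof.
move=> HU; rewrite /char_poly /char_poly_mx.
set Up := map_mx polyC U; set UTp := map_mx polyC U^T.
have UU : Up *m UTp = 1%:M by rewrite -map_mxM HU map_scalar_mx.
have -> : 'X%:M - map_mx polyC (U *m A *m U^T) = Up *m ('X%:M - map_mx polyC A) *m UTp.
  rewrite mulmxBr mulmxBl !map_mxM -/Up -/UTp; congr (_ - _).
  by rewrite scalar_mxC -mulmxA UU mulmx1.
by rewrite !det_mulmx mulrC mulrA -det_mulmx mulmx1C // det1 mul1r.
Qed.

Lemma eigenvalue_orthogonal_conj n (U A : 'M[R]_n) a : orthogonal_mx U ->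
  eigenvalue (U *m A *m U^T) a = eigenvalue A a.
Proof. by move=> HU; rewrite !eigenvalue_root_char char_poly_orthogonal_conj. Qed.

Lemma eigenvalue_diag_mx n (d : 'rV[R]_n) k : eigenvalue (diag_mx d) (d 0 k).
Proof.
apply/eigenvalueP; exists 'e_k; first by rewrite -rowE row_diag_mx.
by apply/eqP => /matrixP /(_ 0 k); rewrite !mxE !eqxx => /eqP; rewrite oner_eq0.
Qed.

Lemma eigenvalue_block_mx_dr m n (B : 'M[R]_m) (C : 'M[R]_(m, n)) (A : 'M[R]_n) a :
  eigenvalue A a -> eigenvalue (block_mx B C 0 A) a.
Proof.
case/eigenvalueP => w wA w0; apply/eigenvalueP; exists (row_mx 0 w).
  by rewrite mul_row_block !mul0mx mulmx0 !add0r wA scale_row_mx scaler0.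
by rewrite row_mx_eq0 negb_and w0 orbT.
Qed.

Lemma symmetric_spectral n (A : 'M[R]_n) : A^T = A ->
  exists Q (d : 'rV[R]_n),
    [/\ orthogonal_mx Q, nonincreasing d & A = Q *m diag_mx d *m Q^T].
Proof.
elim: n A => [|n IH] A AT.
  by exists 1%:M, 0; split; [apply/matrixP => [[]] | case | apply/matrixP => [[]]].
have [m [em mM]] := symmetric_max_eigenvalue AT.
have [v vA v0] := eigenvalueP em.
pose q := (Num.sqrt (sqnorm v))^-1 *: v.
have q1 : sqnorm q = 1.
  have nv : 0 < sqnorm v.
    by rewrite lt_def sqnorm_ge0 andbT; apply: contraNneq v0 => /sqnorm_eq0 ->.
  by rewrite sqnormZ exprVn sqr_sqrtr ?ltW // mulVf // gt_eqF.
have qA : q *m A = m *: q by rewrite -scalemxAl vA !scalerA mulrC.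
have [H HH H0] := orthogonal_mx_row0 q1.
pose B : 'M[R]_(1 + n) := H *m A *m H^T.
have BT : B^T = B by rewrite /B !trmx_mul trmxK AT mulmxA.
have row0B : row 0 B = m *: 'e_0.
  by rewrite /B rowE !mulmxA -rowE H0 qA -scalemxAl -H0 rowE -mulmxA HH mulmx1.
have B_block : B = block_mx m%:M 0 0 (drsubmx B).
  apply: block_mx_deflate => // i; rewrite -BT mxE.
  by have /rowP /(_ (rshift 1 i)) := row0B; rewrite !mxE => ->; rewrite eqxx -val_eqE /= mulr0.
have A'T : (drsubmx B)^T = drsubmx B.
  by rewrite trmx_drsub BT.
have [Q' [d' [HQ' d'S A'E]]] := IH _ A'T.
pose K : 'M[R]_(1 + n) := block_mx 1%:M 0 0 Q'.
exists (H^T *m K), (row_mx (m%:M : 'rV[R]_1) d'); split.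
- exact: orthogonal_mulmx (orthogonal_trmx HH) (orthogonal_block1 HQ').
- apply: nonincreasing_row_mx d'S => k; apply: mM.
  rewrite -(eigenvalue_orthogonal_conj _ _ HH) -/B B_block.
  by apply: (@eigenvalue_block_mx_dr 1); rewrite A'E eigenvalue_orthogonal_conj ?eigenvalue_diag_mx.
- have AE : A = H^T *m B *m H.
    by rewrite /B !mulmxA orthogonal_mxC // mul1mx -mulmxA orthogonal_mxC ?mulmx1.
  have KDK : K *m diag_mx (row_mx (m%:M : 'rV[R]_1) d') *m K^T = B.
    rewrite B_block A'E diag_mx_row /K (tr_block_mx (1%:M : 'M[R]_1)) !trmx0 tr_scalar_mx.
    rewrite !mulmx_block !(mulmx0, mul0mx, mulmx1, mul1mx, addr0, add0r).
    by congr block_mx; apply/matrixP => i j; rewrite !ord1 !mxE.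
  by rewrite AE -KDK trmx_mul trmxK !mulmxA.
Qed.
End Spectral.

Section SVD.
Variable R : rcfType.

Lemma rdiag_row_mx m n (a : R) (s : 'rV[R]_m) :
  (rdiag (row_mx (a%:M : 'rV[R]_1) s) : 'M[R]_(1 + m, 1 + n))
    = block_mx a%:M 0 0 (rdiag s).
Proof.
apply/matrixP => i j; rewrite !mxE.
by case: (splitP i) => [i1 ->|i2 ->]; rewrite !mxE; case: (splitP j) => [j1 ->|j2 ->];
  rewrite ?mxE ?ord1.
Qed.

Lemma rdiag_mul_tr n1 n2 (s t : 'rV[R]_n1) : (n1 <= n2)%N ->
  (rdiag s : 'M[R]_(n1, n2)) *m (rdiag t)^T = diag_mx (\row_i (s 0 i * t 0 i)).
Proof.
move=> le; apply/matrixP => i j; rewrite !mxE (bigD1 (widen_ord le i)) //= big1.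
  rewrite !mxE /= eqxx addr0; case: eqP => [/val_inj ->|ij]; first by rewrite eqxx mulr1n.
  by rewrite mulr0; case: eqP => // ji; case: ij; rewrite ji.
move=> k ki; rewrite !mxE; case: eqP => [ik|]; last by rewrite mul0r.
by move/negP: ki; case; apply/eqP/val_inj; rewrite /= ik.
Qed.

Lemma orthogonal_rows_deflate m n (Y : 'M[R]_(1 + m, 1 + n)) (s : 'rV[R]_(1 + m)) :
  s 0 0 != 0 -> Y *m Y^T = diag_mx (\row_i (s 0 i ^+ 2)) ->
  exists2 H : 'M[R]_(1 + n), orthogonal_mx H &
    Y *m H^T = block_mx (s 0 0)%:M 0 0 (drsubmx (Y *m H^T)).
Proof.
move=> s00 YY; pose q := (s 0 0)^-1 *: row 0 Y.
have q1 : sqnorm q = 1.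
  by rewrite sqnormZ /sqnorm row_dot_row YY !mxE eqxx mulr1n exprVn mulVf ?expf_neq0.
have [H HH H0] := orthogonal_mx_row0 q1; exists H => //.
set Z := Y *m H^T.
have ZZ : Z *m Z^T = diag_mx (\row_i (s 0 i ^+ 2)).
  by rewrite /Z trmx_mul trmxK mulmxA -(mulmxA Y) orthogonal_mxC // mulmx1.
have row0Z : row 0 Z = s 0 0 *: 'e_0.
  have Y0q : row 0 Y = s 0 0 *: q by rewrite /q scalerA mulfV // scale1r.
  by rewrite /Z rowE mulmxA -rowE Y0q -scalemxAl -H0 rowE -mulmxA HH mulmx1.
apply: block_mx_deflate => // i.
have := row_dot_row Z (rshift 1 i) 0; rewrite ZZ row0Z linearZ /= -scalemxAr mxE.
rewrite trmx_delta -colE !mxE -val_eqE /= mulr0n => /eqP.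
by rewrite mulf_eq0 (negbTE s00) => /eqP.
Qed.

Lemma rdiag_factor_orthogonal_rows m n (Y : 'M[R]_(m, n)) (s : 'rV[R]_m) :
  (m <= n)%N -> (forall i, 0 <= s 0 i) -> nonincreasing s ->
  Y *m Y^T = diag_mx (\row_i (s 0 i ^+ 2)) ->
  exists2 M : 'M[R]_n, orthogonal_mx M & Y = rdiag s *m M.
Proof.
elim: m n Y s => [|m IH] n Y s mn s0 sS YY.
  by exists 1%:M; [rewrite /orthogonal_mx trmx1 mulmx1 | apply/matrixP => [[]]].
case: n mn Y YY => [//|n] mn Y YY.
have [s00|s00] := eqVneq (s 0 0) 0.
  have sz i : s 0 i = 0 by apply/le_anti; rewrite s0 andbT -s00 sS.
  have Y0 : Y = 0.
    apply/matrixP => i j; have := @sqnorm_eq0 _ _ (row i Y).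
    rewrite /sqnorm row_dot_row YY !mxE eqxx sz expr0n mulr1n => /(_ erefl) /rowP /(_ j).
    by rewrite !mxE.
  exists 1%:M; first by rewrite /orthogonal_mx trmx1 mulmx1.
  by rewrite mulmx1 Y0; apply/matrixP => i j; rewrite !mxE sz if_same.
have [H HH Z_block] := orthogonal_rows_deflate s00 YY.
pose Z : 'M[R]_(1 + m, 1 + n) := Y *m H^T; rewrite -/Z in Z_block.
have ZZ : Z *m Z^T = Y *m Y^T.
  by rewrite /Z trmx_mul trmxK mulmxA -(mulmxA Y) orthogonal_mxC // mulmx1.
set s' := rsubmx (s : 'rV[R]_(1 + m)).
have [M' HM' Z'E] : exists2 M' : 'M[R]_n, orthogonal_mx M' & drsubmx Z = rdiag s' *m M'.
  apply: IH => // [i|i j ij|]; rewrite ?mxE ?sS ?leq_add2l //.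
  have := congr1 drsubmx ZZ.
  rewrite [in X in X -> _]Z_block (tr_block_mx ((s 0 0)%:M : 'M[R]_1)) !trmx0 YY.
  rewrite mulmx_block !(mulmx0, mul0mx, addr0, add0r) block_mxKdr => ->.
  by apply/matrixP => i j; rewrite !mxE -val_eqE /= eqn_add2l val_eqE.
exists ((block_mx 1%:M 0 0 M' : 'M_(1 + n)) *m H).
  exact: orthogonal_mulmx (orthogonal_block1 HM') HH.
have sE : s = row_mx ((s 0 0)%:M : 'rV[R]_1) s'.
  have s0E : lsubmx (s : 'rV[R]_(1 + m)) = (s 0 0)%:M.
    by apply/matrixP => i j; rewrite !mxE !ord1 eqxx mulr1n; congr (s _ _); apply: val_inj.
  by rewrite -s0E hsubmxK.
have YE : Y = Z *m H by rewrite /Z -mulmxA orthogonal_mxC // mulmx1.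
have blockM : (block_mx (s 0 0)%:M 0 0 (rdiag s') : 'M_(1 + m, 1 + n))
    *m (block_mx 1%:M 0 0 M' : 'M_(1 + n)) = block_mx (s 0 0)%:M 0 0 (rdiag s' *m M').
  by rewrite mulmx_block !(mulmx0, mul0mx, mulmx1, addr0, add0r).
by rewrite YE Z_block Z'E [in RHS]sE rdiag_row_mx mulmxA blockM.
Qed.

Lemma svd_exists n1 n2 (X : 'M[R]_(n1, n2)) : (n1 <= n2)%N ->
  exists U s V, is_svd X U s V.
Proof.
move=> le; have XXT : (X *m X^T)^T = X *m X^T by rewrite trmx_mul trmxK.
have [Q [d [HQ dS XXE]]] := symmetric_spectral XXT.
pose Y := Q^T *m X.
have YY : Y *m Y^T = diag_mx d.
  rewrite /Y trmx_mul trmxK -mulmxA (mulmxA X) XXE !mulmxA orthogonal_mxC // mul1mx.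
  by rewrite -mulmxA orthogonal_mxC // mulmx1.
have d0 i : 0 <= d 0 i.
  by have := sqnorm_ge0 (row i Y); rewrite /sqnorm row_dot_row YY mxE eqxx mulr1n.
pose s : 'rV[R]_n1 := \row_i Num.sqrt (d 0 i).
have s0 i : 0 <= s 0 i by rewrite mxE sqrtr_ge0.
have sS : nonincreasing s by move=> i j ij; rewrite !mxE ler_sqrt ?dS.
have [M HM YE] : exists2 M : 'M[R]_n2, orthogonal_mx M & Y = rdiag s *m M.
  apply: rdiag_factor_orthogonal_rows => //; rewrite YY; congr diag_mx.
  by apply/rowP => i; rewrite !mxE sqr_sqrtr.
exists Q, s, M^T; split => //; first exact: orthogonal_trmx.
by rewrite trmxK -mulmxA -YE /Y mulmxA HQ mul1mx.
Qed.

Lemma sigma_is_svd n1 n2 (X : 'M[R]_(n1, n2)) : (n1 <= n2)%N ->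
  exists U V, is_svd X U (sigma X) V.
Proof.
move=> /(svd_exists X) [U [s [V sv]]].
by apply: (epsilon_spec (inhabits 0) (fun s => exists U V, is_svd X U s V)); exists s, U, V.
Qed.

Lemma is_svd_gram n1 n2 (X : 'M[R]_(n1, n2)) U s V : (n1 <= n2)%N -> is_svd X U s V ->
  X *m X^T = U *m diag_mx (\row_i (s 0 i ^+ 2)) *m U^T.
Proof.
move=> le [_ HV _ _ ->]; rewrite !trmx_mul trmxK !mulmxA -(mulmxA _ V^T) orthogonal_mxC //.
by rewrite mulmx1 -(mulmxA U) rdiag_mul_tr //; congr (_ *m diag_mx _ *m _).
Qed.

Lemma char_poly_diag_mx n (d : 'rV[R]_n) :
  char_poly (diag_mx d) = \prod_(x <- [seq d 0 i | i <- enum 'I_n]) ('X - x%:P).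
Proof.
rewrite char_poly_trig ?diag_mx_is_trig // big_map big_enum /=.
by apply: eq_bigr => i _; rewrite mxE eqxx.
Qed.

Lemma nonincreasing_sorted n (d : 'rV[R]_n) :
  nonincreasing d -> sorted (fun x y => y <= x) [seq d 0 i | i <- enum 'I_n].
Proof.
move=> dS; rewrite sorted_pairwise; last by move=> x y z yx zy; apply: le_trans zy yx.
rewrite pairwise_map; apply: sub_pairwise (fun i j ij => dS i j (ltnW ij)) _.
rewrite -(pairwise_map val (fun a b => a < b)%N) val_enum_ord -sorted_pairwise.
  exact: iota_ltn_sorted.
exact: ltn_trans.
Qed.

(* The squared singular values are the roots of the characteristic polynomial
   of [X X^T], listed in nonincreasing order. *)
Lemma is_svd_uniq n1 n2 (X : 'M[R]_(n1, n2)) U s V U' s' V' : (n1 <= n2)%N ->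
  is_svd X U s V -> is_svd X U' s' V' -> s = s'.
Proof.
move=> le sv sv'; have := is_svd_gram le sv; rewrite (is_svd_gram le sv').
move=> /(congr1 char_poly); case: sv sv' => HU _ s0 sS _ [HU' _ s0' sS' _].
rewrite !char_poly_orthogonal_conj // !char_poly_diag_mx => /prod_XsubC_eq.
have sq (t : 'rV[R]_n1) : (forall i, 0 <= t 0 i) -> nonincreasing t ->
    nonincreasing (\row_i (t 0 i ^+ 2)).
  by move=> t0 tS i j ij; rewrite !mxE ler_pXn2r ?nnegrE ?tS.
have ge_tr : transitive (fun x y : R => y <= x) by move=> x y z yx zy; apply: le_trans zy yx.
have ge_asym : antisymmetric (fun x y : R => y <= x).
  by move=> x y /andP[yx xy]; apply/le_anti; rewrite yx xy.
move=> /(sorted_eq ge_tr ge_asym (nonincreasing_sorted (sq _ s0' sS'))).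
move=> /(_ (nonincreasing_sorted (sq _ s0 sS))) /eq_in_map eqs.
apply/rowP => i; have /eqP := eqs i (mem_enum _ i).
by rewrite !mxE eqrXn2 // => /eqP.
Qed.

Lemma is_svd_sigma n1 n2 (X : 'M[R]_(n1, n2)) U s V : (n1 <= n2)%N ->
  is_svd X U s V -> sigma X = s.
Proof.
move=> le sv; have [U' [V' sv']] := sigma_is_svd X le.
exact: is_svd_uniq le sv' sv.
Qed.
End SVD.

Section RankInner.
Variable R : rcfType.

Lemma nonincreasing_support n (s : 'rV[R]_n) :
  (forall i, 0 <= s 0 i) -> nonincreasing s ->
  exists2 k, (k <= n)%N & forall i : 'I_n, (0 < s 0 i) = (i < k)%N.
Proof.
move=> s0 sS.
have ex : exists j, [forall i : 'I_n, (j <= i)%N ==> (s 0 i == 0)].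
  by exists n; apply/forallP => i; rewrite leqNgt ltn_ord.
case: (ex_minnP ex) => k /forallP sk kmin.
exists k; first by apply: kmin; apply/forallP => i; rewrite leqNgt ltn_ord.
move=> i; case: (ltnP i k) => ik; last by have /implyP/(_ ik)/eqP-> := sk i; rewrite ltxx.
rewrite lt_def s0 andbT; apply: contraTN ik => /eqP si; rewrite -leqNgt.
by apply: kmin; apply/forallP => j; apply/implyP => ij; rewrite eq_le s0 andbT -si sS.
Qed.

Lemma is_svd_rank n1 n2 (X : 'M[R]_(n1, n2)) U s V k : (n1 <= n2)%N -> (k <= n1)%N ->
  is_svd X U s V -> (forall i : 'I_n1, (0 < s 0 i) = (i < k)%N) -> \rank X = k.
Proof.
move=> le kn [HU HV s0 _ ->] sk.
have freeT n (W : 'M[R]_n) : orthogonal_mx W -> row_free W^T.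
  by move=> /orthogonal_trmx /orthogonal_unitmx; rewrite row_free_unit.
rewrite mxrankMfree ?freeT // -mxrank_tr trmx_mul mxrankMfree ?freeT // mxrank_tr.
pose s' : 'rV[R]_n1 := \row_i (if (i < k)%N then s 0 i else 1).
have rdiagE : (rdiag s : 'M[R]_(n1, n2)) = diag_mx s *m pid_mx n1.
  apply/matrixP => i j; rewrite !mxE (bigD1 i) //= big1 ?addr0 => [|l li]; last first.
    by rewrite !mxE eq_sym (negbTE li) mulr0n mul0r.
  by rewrite !mxE eqxx mulr1n ltn_ord andbT; case: eqP; rewrite ?mulr1 ?mulr0.
have diagE : diag_mx s = pid_mx k *m diag_mx s'.
  apply/matrixP => i j; rewrite !mxE (bigD1 i) //= big1 ?addr0 => [|l]; last first.
    by rewrite -val_eqE /= eq_sym => /negbTE li; rewrite !mxE li /= mul0r.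
  rewrite !mxE eqxx /=; case: (ltnP i k) => ik /=; rewrite ?mul1r // mul0r.
  have : ~~ (0 < s 0 i) by rewrite sk -leqNgt.
  by rewrite lt_def s0 andbT negbK => /eqP ->; rewrite mul0rn.
rewrite rdiagE diagE mxrankMfree /row_free ?rank_pid_mx // mxrankMfree ?rank_pid_mx //.
rewrite row_free_unit unitmxE det_diag unitfE prodf_seq_neq0; apply/allP => i _.
by rewrite mxE; case: ifP => ik; rewrite ?oner_eq0 // gt_eqF // sk ik.
Qed.

Lemma rdiag_mulmx n1 n2 p (s : 'rV[R]_n1) (M : 'M[R]_(n2, p)) (le : (n1 <= n2)%N) :
  (rdiag s : 'M[R]_(n1, n2)) *m M = \matrix_(i, j) (s 0 i * M (widen_ord le i) j).
Proof.
apply/matrixP => i j; rewrite !mxE (bigD1 (widen_ord le i)) //= big1 ?addr0.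
  by rewrite !mxE eqxx.
move=> k ki; rewrite !mxE; case: eqP => [ik|]; last by rewrite mul0r.
by move/negP: ki; case; apply/eqP/val_inj; rewrite /= ik.
Qed.

Lemma trinner_rdiag n1 n2 (P U : 'M[R]_n1) (Q V : 'M[R]_n2) (t s : 'rV[R]_n1)
    (le : (n1 <= n2)%N) :
  trinner (P *m rdiag t *m Q^T) (U *m rdiag s *m V^T) =
  \sum_i \sum_j (P^T *m U) i j * (s 0 j * (t 0 i *
      (Q^T *m V) (widen_ord le i) (widen_ord le j))).
Proof.
rewrite /trinner; set A := P^T *m U; set B := Q^T *m V.
set T := (rdiag t : 'M[R]_(n1, n2)); set S := (rdiag s : 'M[R]_(n1, n2)).
have -> : (P *m T *m Q^T)^T *m (U *m S *m V^T) = (Q *m T^T) *m (A *m S *m V^T).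
  by rewrite !trmx_mul trmxK !mulmxA.
rewrite mxtrace_mulC.
have -> : A *m S *m V^T *m (Q *m T^T) = A *m (S *m (T *m B)^T).
  by rewrite !trmx_mul trmxK !mulmxA.
rewrite /mxtrace; apply: eq_bigr => i _; rewrite !mxE; apply: eq_bigr => j _.
have /matrixP /(_ j i) := rdiag_mulmx s (T *m B)^T le; rewrite mxE => ->.
have /matrixP /(_ i (widen_ord le j)) := rdiag_mulmx t B le; rewrite mxE.
by rewrite !mxE => ->.
Qed.
Lemma sum_cond_le_sum (I : finType) (P : pred I) (F : I -> R) :
  (forall i, 0 <= F i) -> \sum_(i | P i) F i <= \sum_i F i.
Proof. by move=> F0; rewrite [leRHS](bigID P) /= lerDl sumr_ge0. Qed.

Lemma orthogonal_mx_row_sqr n (A : 'M[R]_n) i :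
  orthogonal_mx A -> \sum_j A i j ^+ 2 = 1.
Proof.
move=> /matrixP /(_ i i); rewrite !mxE eqxx mulr1n => <-.
by apply: eq_bigr => j _; rewrite mxE expr2.
Qed.

Lemma orthogonal_mx_col_sqr n (A : 'M[R]_n) j :
  orthogonal_mx A -> \sum_i A i j ^+ 2 = 1.
Proof.
move=> /orthogonal_trmx /(orthogonal_mx_row_sqr j) <-.
by apply: eq_bigr => i _; rewrite mxE.
Qed.

(* Each column in [J] has squared norm 1, each row in [I] at most 1. *)
Lemma orthogonal_mx_support_card n (A : 'M[R]_n) (I J : {pred 'I_n}) :
  orthogonal_mx A -> (forall i j, j \in J -> i \notin I -> A i j = 0) ->
  (#|J| <= #|I|)%N.
Proof.
move=> HA AIJ; rewrite -(ler_nat R) -!sumr_const.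
have -> : \sum_(j in J) (1 : R) = \sum_(j in J) \sum_(i in I) A i j ^+ 2.
  apply: eq_bigr => j jJ; rewrite -(orthogonal_mx_col_sqr j HA) (bigID [in I]) /=.
  by rewrite [X in _ + X = _]big1 ?addr0 // => i iI; rewrite AIJ ?expr0n.
rewrite exchange_big /=; apply: ler_sum => i _.
by rewrite -(orthogonal_mx_row_sqr i HA) sum_cond_le_sum // => j; rewrite sqr_ge0.
Qed.

Lemma weighted_inner_le n (a b t : 'I_n -> R) : (forall i, 0 <= t i <= 1) ->
  \sum_i a i ^+ 2 = 1 -> \sum_i b i ^+ 2 <= 1 ->
  \sum_i (1 - t i) * a i ^+ 2 <= 2 * (1 - \sum_i t i * a i * b i).
Proof.
move=> t01 a1 b1.
have pointwise i : (1 - t i) * a i ^+ 2 <= a i ^+ 2 + b i ^+ 2 - 2 * (t i * a i * b i).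
  have /andP[t0 t1] := t01 i; rewrite -subr_ge0.
  have -> : a i ^+ 2 + b i ^+ 2 - 2 * (t i * a i * b i) - (1 - t i) * a i ^+ 2
      = t i * (a i - b i) ^+ 2 + (1 - t i) * b i ^+ 2 by ring.
  by rewrite addr_ge0 // mulr_ge0 ?sqr_ge0 ?subr_ge0.
apply: le_trans (ler_sum _ (fun i _ => pointwise i)) _.
rewrite sumrB big_split /= a1 -mulr_sumr; lra.
Qed.

Lemma card_ord_lt n k : (k <= n)%N -> #|[pred i : 'I_n | (i < k)%N]| = k.
Proof.
move=> kn; rewrite -sum1_card (eq_bigl (fun i : 'I_n => true && (i < k)%N)) //.
by rewrite (big_ord_narrow_cond kn) /= sum1_card card_ord.
Qed.
(* Equality case of von Neumann's trace inequality for [|W| <= 1]. *)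
Lemma rank_le_card_sigma_eq1 n1 n2 (X W : 'M[R]_(n1, n2)) U s V P t Q :
  (n1 <= n2)%N -> is_svd X U s V -> is_svd W P t Q -> (forall i, t 0 i <= 1) ->
  \sum_i s 0 i = trinner W X -> (\rank X <= #|[pred i : 'I_n1 | (t 0 i == 1)%R]|)%N.
Proof.
move=> le svX [HP HQ t0 _ WE] t1 nuc; case: (svX) => HU HV s0 sS XE.
have [k kn sk] := nonincreasing_support s0 sS.
rewrite (is_svd_rank le kn svX sk) -{1}(card_ord_lt kn).
have t01 i : 0 <= t 0 i <= 1 by rewrite t0 t1.
set A := P^T *m U; set B := Q^T *m V; set w := widen_ord le.
have HA : orthogonal_mx A by apply/orthogonal_mulmx/HU/orthogonal_trmx.
have HB : orthogonal_mx B by apply/orthogonal_mulmx/HV/orthogonal_trmx.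
pose c j := \sum_i t 0 i * A i j * B (w i) (w j).
have defect j : \sum_i (1 - t 0 i) * A i j ^+ 2 <= 2 * (1 - c j).
  apply: weighted_inner_le => //; first exact: orthogonal_mx_col_sqr.
  rewrite -(orthogonal_mx_col_sqr (w j) HB).
  rewrite -(big_ord_narrow_cond (P := xpredT) (F := fun a => B a (w j) ^+ 2) le) /=.
  by apply: sum_cond_le_sum => a; rewrite sqr_ge0.
have defect0 j : 0 <= \sum_i (1 - t 0 i) * A i j ^+ 2.
  by apply: sumr_ge0 => i _; have /andP[_ ti1] := t01 i; rewrite mulr_ge0 ?sqr_ge0 ?subr_ge0.
have slack : \sum_j s 0 j * (1 - c j) = 0.
  have -> : \sum_j s 0 j * (1 - c j) = \sum_j s 0 j - \sum_j s 0 j * c j.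
    by rewrite -sumrB; apply: eq_bigr => j _; ring.
  rewrite nuc WE XE (trinner_rdiag _ _ _ _ _ _ le) exchange_big /=; apply/eqP.
  rewrite subr_eq0; apply/eqP/eq_bigr => j _; rewrite /c mulr_sumr.
  by apply: eq_bigr => i _; ring.
have tight (j : 'I_n1) : (j < k)%N -> \sum_i (1 - t 0 i) * A i j ^+ 2 = 0.
  move=> jk; have sj : 0 < s 0 j by rewrite sk.
  have term_ge0 l : 0 <= s 0 l * (1 - c l).
    by rewrite mulr_ge0 //; have := le_trans (defect0 l) (defect l); lra.
  move/eqP: slack; rewrite psumr_eq0 => [/allP/(_ j (mem_index_enum _))|l _] //.
  rewrite mulf_eq0 (gt_eqF sj) /= => /eqP cj1.
  by apply/le_anti; rewrite defect0 andbT; have := defect j; rewrite cj1 mulr0.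
apply: orthogonal_mx_support_card HA _ => i j; rewrite !inE => jk ti.
move/eqP: (tight j jk); rewrite psumr_eq0 => [/allP/(_ i (mem_index_enum _))|l _].
  by rewrite mulf_eq0 subr_eq0 eq_sym (negbTE ti) sqrf_eq0 => /eqP.
by have /andP[_ tl1] := t01 l; rewrite mulr_ge0 ?sqr_ge0 ?subr_ge0.
Qed.
End RankInner.

Section Problems.
Variable R : rcfType.
Variables (n1 n2 : nat) (tstar : R) (phi : R -> ereal R).
Hypotheses (le_n12 : (n1 <= n2)%N) (phiP : in_Phi tstar phi).

Lemma Q_obj_finite (W : 'M[R]_(n1, n2)) (g : 'I_n1 -> R) :
  (forall i, phi (sigma W 0 i) = Some (g i)) -> Q_obj phi W = Some (\sum_i g i).
Proof.
move=> phig; rewrite /Q_obj -big_enum /=.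
elim: (enum 'I_n1) => [|i r IH] /=; first by rewrite big_nil.
by rewrite IH phig big_cons.
Qed.

Lemma phi_unit_interval t : 0 <= t <= 1 -> exists2 y, phi t = Some y & 0 <= y.
Proof.
case: phiP => [[_ _ dom _] [_ _ phi_ge0 _]] t01; have [e [e0 phi_fin]] := dom t t01.
case E: (phi t) => [y|]; last by case: (phi_fin t); rewrite ?subrr ?normr0.
by exists y => //; have := phi_ge0 t t01; rewrite E.
Qed.

Lemma Q_obj_ge_rank f Om delta (X W : 'M[R]_(n1, n2)) : Q_feasible f Om delta X W ->
  exists2 v, Q_obj phi W = Some v & (\rank X)%:R <= v.
Proof.
move=> [nuc specW _ _].
have [U [V svX]] := sigma_is_svd X le_n12.
have [P [Q svW]] := sigma_is_svd W le_n12.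
have t1 i : sigma W 0 i <= 1 by apply: le_trans specW; apply: le_bigmax.
have t01 i : 0 <= sigma W 0 i <= 1 by rewrite t1 andbT; case: svW => _ _ ->.
pose g i := if phi (sigma W 0 i) is Some y then y else 0.
have phig i : phi (sigma W 0 i) = Some (g i).
  by rewrite /g; have [y -> _] := phi_unit_interval (t01 i).
exists (\sum_i g i); first exact: Q_obj_finite.
apply: le_trans (_ : #|[pred i : 'I_n1 | sigma W 0 i == 1]|%:R <= _).
  rewrite ler_nat; apply: rank_le_card_sigma_eq1 le_n12 svX svW t1 _.
  by move/eqP: nuc; rewrite subr_eq0 => /eqP.
rewrite -sumr_const; apply: le_trans (sum_cond_le_sum _ _) => [|i]; last first.
  by rewrite /g; have [y -> ] := phi_unit_interval (t01 i).
apply: ler_sum => i /eqP ti; rewrite /g ti; by case: phiP => _ [_ _ _ ->].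
Qed.
Lemma sigma_Wstar (U : 'M[R]_n1) (V : 'M[R]_n2) k t :
  orthogonal_mx U -> orthogonal_mx V -> 0 <= t <= 1 ->
  sigma (Wstar U V k t) = \row_i (if (i < k)%N then 1 else t).
Proof.
move=> HU HV /andP[t0 t1]; apply: (is_svd_sigma le_n12); split; [exact: HU | exact: HV | | | by []].
- by move=> i; rewrite mxE; case: ifP.
- move=> i j ij; rewrite !mxE; case: ifP => jk; case: ifP => ik //.
  by move: ik; rewrite (leq_ltn_trans ij jk).
Qed.

Lemma Q_obj_Wstar (U : 'M[R]_n1) (V : 'M[R]_n2) k :
  orthogonal_mx U -> orthogonal_mx V -> (k <= n1)%N ->
  Q_obj phi (Wstar U V k tstar) = Some k%:R.
Proof.
move=> HU HV kn; have [_ [/andP[ts0 ts1] phi_ts _ phi1]] := phiP.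
rewrite (@Q_obj_finite _ (fun i => if (i < k)%N then 1 else 0)).
  by rewrite -big_mkcond /= sumr_const card_ord_lt.
by move=> i; rewrite sigma_Wstar ?ts0 ?ltW // mxE; case: ifP.
Qed.
Lemma Q_feasible_Wstar f Om delta (X : 'M[R]_(n1, n2)) U V :
  rank_feasible f Om delta X -> orthogonal_mx U -> orthogonal_mx V ->
  X = U *m rdiag (sigma X) *m V^T ->
  Q_feasible f Om delta X (Wstar U V (\rank X) tstar).
Proof.
move=> [fX OmX] HU HV XE; have [_ [/andP[ts0 ts1] _ _ _]] := phiP.
have [U0 [V0 [_ _ s0 sS _]]] := sigma_is_svd X le_n12.
have [k kn sk] := nonincreasing_support s0 sS.
have svX : is_svd X U (sigma X) V by split; [exact: HU | exact: HV | | | ].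
have rk : \rank X = k by apply: is_svd_rank le_n12 kn svX sk.
have sigWE := sigma_Wstar k HU HV (introT andP (conj ts0 (ltW ts1))).
rewrite rk; split => //; last first.
  by rewrite /specnorm sigWE; apply: bigmax_le => // i _; rewrite mxE; case: ifP => // _; apply: ltW.
apply/eqP; rewrite subr_eq0 /nucnorm {2}XE /Wstar (trinner_rdiag _ _ _ _ _ _ le_n12).
rewrite !orthogonal_mxC //; apply/eqP/eq_bigr => i _.
rewrite (bigD1 i) //= big1 => [|j ji]; last by rewrite !mxE eq_sym (negbTE ji) mul0r.
rewrite !mxE !eqxx !mulr1n addr0 mul1r mulr1; case: ifP => ik; first by rewrite mulr1.
suff -> : sigma X 0 i = 0 by rewrite mul0r.
by apply/eqP; rewrite eq_le s0 andbT leNgt sk ik.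
Qed.
Lemma Wstar_Q_optimal f Om delta (X : 'M[R]_(n1, n2)) U V :
  rank_optimal f Om delta X -> orthogonal_mx U -> orthogonal_mx V ->
  X = U *m rdiag (sigma X) *m V^T ->
  Q_optimal phi f Om delta X (Wstar U V (\rank X) tstar).
Proof.
move=> [feasX minX] HU HV XE; split; first exact: Q_feasible_Wstar.
move=> X' W' feas'; rewrite Q_obj_Wstar ?rank_leq_row //.
have [v -> rv] := Q_obj_ge_rank feas'; apply: le_trans rv.
by rewrite ler_nat; apply: minX; case: feas'.
Qed.
End Problems.

Unset Implicit Arguments.

Theorem lemma4p1 (R : rcfType) (n1 n2 : nat) (tstar : R) (phi : R -> ereal R)
  (f : 'M[R]_(n1, n2) -> ereal R) (Om : 'M[R]_(n1, n2) -> Prop) (delta : R) :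
  in_Phi tstar phi ->
  proper_fun f -> lsc_mx f ->
  closed_mx Om ->
  (n1 <= n2)%N ->
  0 < delta ->
  (exists X, rank_optimal f Om delta X) ->
  (forall (Xs : 'M[R]_(n1, n2)) (U : 'M[R]_n1) (V : 'M[R]_n2),
      rank_optimal f Om delta Xs ->
      orthogonal_mx U -> orthogonal_mx V ->
      Xs = U *m rdiag (sigma Xs) *m V^T ->
      Q_optimal phi f Om delta Xs (Wstar U V (\rank Xs) tstar))
  /\
  (forall Xs Ws : 'M[R]_(n1, n2),
      Q_optimal phi f Om delta Xs Ws -> rank_optimal f Om delta Xs).
Proof.
move=> phiP _ _ _ le _ [X0 [feasX0 minX0]].
split=> [Xs U V optXs HU HV XsE | Xs Ws [feasXs optWs]].
  exact: Wstar_Q_optimal.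
have [U0 [V0 [HU0 HV0 _ _ X0E]]] := sigma_is_svd X0 le.
have := optWs _ _ (Q_feasible_Wstar le phiP feasX0 HU0 HV0 X0E).
rewrite Q_obj_Wstar ?rank_leq_row //.
have [v -> rankXs_le] := Q_obj_ge_rank le phiP feasXs => /= v_le.
have rankXs : (\rank Xs <= \rank X0)%N by rewrite -(ler_nat R); apply: le_trans v_le.
case: feasXs => _ _ OmXs fXs; split=> [// | Y feasY].
exact: leq_trans rankXs (minX0 Y feasY).
Qed.
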